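(* Generalized MES does not satisfy EJR-M: there exists an instance in which the allocation returned by Generalized MES violates EJR-M.
   Context: Model: There is a set of agents $N=\{1,\dots,n\}$. The resource $R$ consists of a cake $C=[0,c]$ for a real $c\ge 0$ and a set of indivisible goods $G=\{g_1,\dots,g_m\}$ for an integer $m\ge 0$, with $\max(c,m)>0$. A piece of cake is a union of finitely many disjoint closed subintervals of $C$; its length $\ell(\cdot)$ is the sum of the lengths of its intervals. A bundle $R'=(C',G')$ consists of a piece of cake $C'\subseteq C$ and a set $G'\subseteq G$; its size is $s(R')=\ell(C')+|G'|$. Each agent $i$ approves a bundle $R_i=(C_i,G_i)$, and her utility for a bundle $R'$ is $u_i(R')=\ell(C_i\cap C')+|G_i\cap G'|$. A parameter $\alpha\in(0,c+m]$ is given; an allocation is a bundle $A$ with $s(A)\le\alpha$. For a real $t>0$, $N^*\subseteq N$ is $t$-cohesive if $|N^*|\ge t n/\alpha$ and $s(\bigcap_{i\in N^*}R_i)\ge t$. EJR-M: an allocation $A$ satisfies EJR-M if for every real $t>0$ and every $t$-cohesive group $N^*$ for which there exists a bundle $R^*\subseteq R$ with $s(R^* )=t$ and $R^*\subseteq R_i$ for all $i\in N^*$, there is $j\in N^*$ with $u_j(A)\ge t$. Generalized MES (Method of Equal Shares): Step 1: set $R'=(C',G')=(\emptyset,\emptyset)$ and budgets $b_i=\alpha/n$ for all $i$; agents still present are ''remaining''. Step 2: divide the remaining cake into intervals $I_1,\dots,I_k$ such that each agent approves each interval entirely or not at all. For an interval $I_j=[x_0,x_1]$, $x\in(x_0,x_1]$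 and $\rho\ge 0$, $I_j$ is $(x,\rho)$-affordable if $\sum_{i\in N_{I_j}}\min(b_i,(x-x_0)\rho)=x-x_0$, where $N_{I_j}$ is the set of remaining agents approving $I_j$. A remaining good $g$ is $\rho$-affordable if $\sum_{i\in N_g}\min(b_i,\rho)=1$, where $N_g$ is the set of remaining agents approving $g$. Step 3: if no $\rho$-affordable good and no $(x,\rho)$-affordable piece of cake exists for any $\rho$, return $R'$. Otherwise take either an interval $I_j$ with the smallest $\rho$ together with the largest $x$ such that $I_j$ is $(x,\rho)$-affordable, or a good $g$ with the smallest $\rho$ such that $g$ is $\rho$-affordable, whichever has smaller $\rho$. In the first case deduct $\min(b_i,(x-x_0)\rho)$ from $b_i$ for each $i\in N_{I_j}$, remove $[x_0,x]$ from the remaining cake and add it to $C'$; in the second case deduct $\min(b_i,\rho)$ from $b_i$ for each $i\in N_g$, remove $g$ from the remaining goods and add it to $G'$. Remove all agents with zero budget and go to Step 2. *)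

From HB Require Import structures.
From mathcomp Require Import all_boot all_order all_algebra.
From mathcomp Require Import all_classical all_reals all_analysis.
Set Implicit Arguments. Unset Strict Implicit. Unset Printing Implicit Defensive.
Import Order.TTheory GRing.Theory Num.Theory.
Local Open Scope classical_set_scope.
Local Open Scope ring_scope.

Section Model.
Variable R : realType.

Definition citv (a b : R) : set R := [set x | a <= x <= b].
Definition oitv (a b : R) : set R := [set x | a < x < b].

Definition is_piece (c : R) (S : set R) : Prop :=
  exists s : seq (R * R),
    all (fun p => (0 <= p.1) && (p.1 <= p.2) && (p.2 <= c)) s /\
    pairwise (fun p q => (p.2 < q.1) || (q.2 < p.1)) s /\
    S = [set x | exists2 p, p \in s & p.1 <= x <= p.2].

Definition len (S : set R) : R := fine (@lebesgue_measure R S).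

Variables (n m : nat).

(* An instance: cake [0,c], goods 'I_m, agents 'I_n, parameter alpha,
   agent i approves the bundle (Ca i, Ga i). *)
Definition valid_instance (c alpha : R) (Ca : 'I_n -> set R)
    (Ga : 'I_n -> {set 'I_m}) : Prop :=
  (0 < n)%N /\ 0 <= c /\ (0 < c \/ (0 < m)%N) /\
  0 < alpha /\ alpha <= c + m%:R /\ (forall i, is_piece c (Ca i)).

Definition bundle := (set R * {set 'I_m})%type.

Definition size_b (A : bundle) : R := len A.1 + #|A.2|%:R.

Definition util (Ci : set R) (Gi : {set 'I_m}) (A : bundle) : R :=
  len (Ci `&` A.1) + #|Gi :&: A.2|%:R.

Definition EJRM (c alpha : R) (Ca : 'I_n -> set R) (Ga : 'I_n -> {set 'I_m})
    (A : bundle) : Prop :=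
  forall (t : R) (Ns : {set 'I_n}), 0 < t ->
    t * n%:R / alpha <= #|Ns|%:R ->
    t <= size_b ([set x | 0 <= x <= c /\ forall i, i \in Ns -> Ca i x],
                 (\bigcap_(i in Ns) Ga i)%SET) ->
    (exists Rs : bundle, is_piece c Rs.1 /\ size_b Rs = t /\
        forall i, i \in Ns -> Rs.1 `<=` Ca i /\ Rs.2 \subset Ga i) ->
    exists2 j, j \in Ns & t <= util (Ca j) (Ga j) A.

Variables (c alpha : R) (Ca : 'I_n -> set R) (Ga : 'I_n -> {set 'I_m}).

(* state: (allocated cake C', allocated goods G', budgets b).
   The remaining cake is [0,c] minus C', the remaining goods are ~: G',
   the remaining agents are those with b i > 0. *)
Definition mstate := (set R * {set 'I_m} * ('I_n -> R))%type.

Definition mes_init : mstate := (set0, finset.set0, fun _ => alpha / n%:R).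

Definition division (Cp : set R) (D : seq (R * R)) : Prop :=
  all (fun p => (0 <= p.1) && (p.1 < p.2) && (p.2 <= c)) D /\
  pairwise (fun p q => (p.2 <= q.1) || (q.2 <= p.1)) D /\
  (forall p, p \in D -> oitv p.1 p.2 `&` Cp = set0) /\
  (citv 0 c `<=` Cp `|` [set x | exists2 p, p \in D & p.1 <= x <= p.2]) /\
  (forall p i, p \in D -> citv p.1 p.2 `<=` Ca i \/ oitv p.1 p.2 `&` Ca i = set0).

Definition inNI (b : 'I_n -> R) (p : R * R) (i : 'I_n) : bool :=
  (0 < b i) && `[< citv p.1 p.2 `<=` Ca i >].

Definition cake_aff (b : 'I_n -> R) (p : R * R) (x rho : R) : Prop :=
  0 <= rho /\ p.1 < x <= p.2 /\
  \sum_(i | inNI b p i) Num.min (b i) ((x - p.1) * rho) = x - p.1.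

Definition inNg (b : 'I_n -> R) (g : 'I_m) (i : 'I_n) : bool :=
  (0 < b i) && (g \in Ga i).

Definition good_aff (Gp : {set 'I_m}) (b : 'I_n -> R) (g : 'I_m) (rho : R) : Prop :=
  g \notin Gp /\ 0 <= rho /\
  \sum_(i | inNg b g i) Num.min (b i) rho = 1.

Inductive mes_step : mstate -> mstate -> Prop :=
| mes_step_cake Cp Gp b D p x rho :
    division Cp D -> p \in D -> cake_aff b p x rho ->
    (forall q y r, q \in D -> cake_aff b q y r -> rho <= r) ->
    (forall g r, good_aff Gp b g r -> rho <= r) ->
    (forall y, cake_aff b p y rho -> y <= x) ->
    mes_step (Cp, Gp, b)
      (Cp `|` citv p.1 x, Gp,
       fun i => if inNI b p i then b i - Num.min (b i) ((x - p.1) * rho) else b i)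
| mes_step_good Cp Gp b D g rho :
    division Cp D -> good_aff Gp b g rho ->
    (forall q y r, q \in D -> cake_aff b q y r -> rho <= r) ->
    (forall h r, good_aff Gp b h r -> rho <= r) ->
    mes_step (Cp, Gp, b)
      (Cp, g |: Gp,
       fun i => if inNg b g i then b i - Num.min (b i) rho else b i).

Inductive mes_star : mstate -> mstate -> Prop :=
| mes_star_refl s : mes_star s s
| mes_star_step s1 s2 s3 : mes_step s1 s2 -> mes_star s2 s3 -> mes_star s1 s3.

Definition mes_final (s : mstate) : Prop :=
  exists D, division s.1.1 D /\
    (forall q y r, q \in D -> ~ cake_aff s.2 q y r) /\
    (forall g r, ~ good_aff s.1.2 s.2 g r).

(* A is an allocation that Generalized MES may return (under some choice of
   divisions and tie-breaking). *)
Definition mes_outcome (A : bundle) : Prop :=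
  exists s, mes_star mes_init s /\ mes_final s /\ A = (s.1.1, s.1.2).

End Model.

From HB Require Import structures.
From mathcomp Require Import all_boot all_order all_algebra.
From mathcomp Require Import all_classical all_reals all_analysis.
From mathcomp Require Import ring lra.
Set Implicit Arguments. Unset Strict Implicit. Unset Printing Implicit Defensive.
Import Order.TTheory GRing.Theory Num.Theory.
Local Open Scope classical_set_scope.
Local Open Scope ring_scope.

(* Instance: three agents, cake [0, 1/2] approved by everybody, one good
   approved by agents 0 and 1 only, alpha = 3/2, so every budget is 1/2.
   Buying cake costs at least 1/n = 1/3 per unit of length (all three agents
   share it), while the good costs at least 1/2 (only two agents share it).
   Hence MES first buys cake; this strictly lowers the budgets of agents 0
   and 1, whose total then stays below 1 for the rest of the run, so the good
   is never affordable.  Every outcome therefore consists of cake only, and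
   gives each agent utility at most 1/2, whereas {0, 1} is a 1-cohesive group
   (2 >= 1 * 3 / (3/2)) that jointly approves the good: EJR-M fails. *)

Section GeneralFacts.
Variables (R : realType) (n m : nat).

Lemma citv_measurable (a b : R) : measurable (citv a b).
Proof. by rewrite /citv -set_itvcc; exact: measurable_itv. Qed.

Lemma len_ge0 (S : set R) : 0 <= len S.
Proof. by apply: fine_ge0; exact: measure_ge0. Qed.

Lemma len_le_citv (c : R) (S : set R) :
  0 <= c -> measurable S -> S `<=` citv 0 c -> len S <= c.
Proof.
move=> c0 mS sS.
have lenC : lebesgue_measure (citv 0 c) = c%:E.
  rewrite /citv -set_itvcc lebesgue_measure_itv /= lte_fin oppr0 adde0.
  by case: ltrP => // c_le0; congr (_%:E); apply/eqP; rewrite eq_le c_le0 c0.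
have hle : (lebesgue_measure S <= c%:E)%E.
  by rewrite -lenC; apply: le_measure => //; rewrite inE //; exact: citv_measurable.
rewrite /len; move: hle (measure_ge0 (@lebesgue_measure R) S).
by case: (lebesgue_measure S) => [r /=|//|//]; rewrite lee_fin.
Qed.

Lemma sum_min_le (P : pred 'I_n) (F : 'I_n -> R) (z : R) :
  \sum_(i | P i) Num.min (F i) z <= #|P|%:R * z.
Proof.
rewrite mulr_natl -sumr_const; apply: ler_sum => i _.
by rewrite ge_min lexx orbT.
Qed.

(* Cake is never affordable below price 1/n: the length x - p.1 is paid by
   at most n agents, each paying at most (x - p.1) * rho. *)
Lemma cake_aff_price (Ca : 'I_n -> set R) (b : 'I_n -> R) (p : R * R) (x rho : R) :
  cake_aff Ca b p x rho -> 1 <= n%:R * rho.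
Proof.
case=> rho0 [/andP [px _] hsum].
have d0 : 0 < x - p.1 by rewrite subr_gt0.
have hcard : #|inNI Ca b p|%:R <= n%:R :> R.
  by rewrite ler_nat -[X in (_ <= X)%N]card_ord max_card.
have := sum_min_le (inNI Ca b p) b ((x - p.1) * rho).
rewrite hsum mulrCA -[X in X <= _]mulr1 ler_pM2l // => hk.
by apply: le_trans hk _; rewrite ler_wpM2r.
Qed.

Lemma good_aff_price (Ga : 'I_n -> {set 'I_m}) (Gp : {set 'I_m}) (b : 'I_n -> R)
    (g : 'I_m) (rho : R) :
  good_aff Ga Gp b g rho -> 1 <= #|[pred i | g \in Ga i]|%:R * rho.
Proof.
case=> _ [rho0 hsum]; rewrite -{1}hsum mulr_natl -sumr_const.
rewrite big_mkcond [X in _ <= X]big_mkcond /=; apply: ler_sum => i _.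
rewrite /inNg inE; case: (g \in Ga i); rewrite ?andbT ?andbF //.
by case: ifP => _ //; rewrite ge_min lexx orbT.
Qed.

Lemma good_aff_budget (Ga : 'I_n -> {set 'I_m}) (Gp : {set 'I_m}) (b : 'I_n -> R)
    (g : 'I_m) (rho : R) :
  (forall i, 0 <= b i) -> good_aff Ga Gp b g rho ->
  1 <= \sum_(i | g \in Ga i) b i.
Proof.
move=> b0 [_ [_ hsum]]; rewrite -hsum big_mkcond [X in _ <= X]big_mkcond /=.
apply: ler_sum => i _; rewrite /inNg.
case: (g \in Ga i); rewrite ?andbT ?andbF //.
by case: ifP => _ //; rewrite ge_min lexx.
Qed.

Lemma pay_bounds (P : bool) (a z : R) : 0 <= a -> 0 <= z ->
  0 <= (if P then a - Num.min a z else a) <= a.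
Proof.
move=> a0 z0; case: P; last by rewrite a0 lexx.
have : Num.min a z <= a by rewrite ge_min lexx.
have : 0 <= Num.min a z by rewrite le_min a0 z0.
move: (Num.min a z) => M; lra.
Qed.

Lemma cake_aff_uniform (Ca : 'I_n -> set R) (b : 'I_n -> R) (p : R * R) :
  (0 < n)%N -> p.1 < p.2 -> (forall i, inNI Ca b p i) ->
  (forall i, (p.2 - p.1) / n%:R <= b i) -> cake_aff Ca b p p.2 n%:R^-1.
Proof.
move=> n0 hp hall hb; split; first by rewrite invr_ge0.
split; first by rewrite hp lexx.
rewrite (eq_bigl xpredT) // (eq_bigr (fun=> (p.2 - p.1) / n%:R)).
  by rewrite sumr_const card_ord -[(_ / _) *+ n]mulr_natr divfK // pnatr_eq0 -lt0n.
by move=> i _; rewrite min_r.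
Qed.

Lemma division_piece (c : R) (Ca : 'I_n -> set R) (Cp : set R)
    (D : seq (R * R)) (p : R * R) :
  division c Ca Cp D -> p \in D -> [/\ 0 <= p.1, p.1 < p.2 & p.2 <= c].
Proof. by case=> /allP hall _ /hall /andP [/andP []]. Qed.

(* A division of the untouched cake has an interval (the one containing 0). *)
Lemma division_full (c : R) (Ca : 'I_n -> set R) (D : seq (R * R)) :
  0 <= c -> division c Ca set0 D -> exists p, p \in D.
Proof.
move=> c0 [_ [_ [_ [hcov _]]]].
have : citv 0 c 0 by rewrite /citv /= lexx c0.
by case/hcov => // -[p pD _]; exists p.
Qed.

Lemma bought_piece_sub (c : R) (Ca : 'I_n -> set R) (Cp : set R)
    (D : seq (R * R)) (b : 'I_n -> R) (p : R * R) (x rho : R) :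
  division c Ca Cp D -> p \in D -> cake_aff Ca b p x rho ->
  citv p.1 x `<=` citv 0 c.
Proof.
move=> hD pD [_ [/andP [_ xp] _]]; have [p10 _ p2c] := division_piece hD pD.
move=> y /andP [py yx]; apply/andP; split; first exact: le_trans py.
exact: le_trans yx (le_trans xp p2c).
Qed.

End GeneralFacts.

Section Counterexample.
Variable R : realType.

Definition ex_c : R := 1/2.
Definition ex_alpha : R := 3/2.
Definition ex_Ca (i : 'I_3) : set R := citv 0 ex_c.
Definition ex_Ga (i : 'I_3) : {set 'I_1} :=
  if val i == 2%N then finset.set0 else [set: 'I_1]%SET.

Lemma ex_c_gt0 : 0 < ex_c.
Proof. by rewrite /ex_c; lra. Qed.

Lemma ex_Ga_mem (g : 'I_1) (i : 'I_3) : (g \in ex_Ga i) = (val i != 2%N).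
Proof. by rewrite /ex_Ga; case: eqP => _; rewrite inE. Qed.

Lemma card_supporters (g : 'I_1) : #|[pred i | g \in ex_Ga i]| = 2%N.
Proof.
rewrite (@eq_card _ _ (predC1 (ord_max : 'I_3))) ?cardC1 ?card_ord // => i.
by rewrite !inE ex_Ga_mem.
Qed.

Definition ex_init : mstate R 3 1 := mes_init 3 1 ex_alpha.

Lemma ex_init_budget (i : 'I_3) : ex_init.2 i = 1/2.
Proof. by rewrite /= /ex_alpha; field. Qed.

Definition supporters_budget (b : 'I_3 -> R) : R :=
  \sum_(i | ord0 \in ex_Ga i) b i.

Definition ex_inv (s : mstate R 3 1) : Prop :=
  [/\ s.1.2 = finset.set0, measurable s.1.1, s.1.1 `<=` citv 0 ex_c,
      forall i, 0 <= s.2 i & supporters_budget s.2 < 1].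

Lemma ex_inv_no_good (s : mstate R 3 1) (g : 'I_1) (rho : R) :
  ex_inv s -> ~ good_aff ex_Ga s.1.2 s.2 g rho.
Proof.
case=> _ _ _ b0 hlt /(good_aff_budget b0); rewrite (ord1 g).
by rewrite leNgt hlt.
Qed.

Lemma ex_approves (i : 'I_3) (a b : R) :
  0 <= a -> b <= ex_c -> citv a b `<=` ex_Ca i.
Proof.
move=> a0 bc y /andP [ay yb].
by apply/andP; split; [exact: le_trans ay | exact: le_trans bc].
Qed.

Lemma ex_init_aff (p : R * R) : 0 <= p.1 -> p.1 < p.2 -> p.2 <= ex_c ->
  cake_aff ex_Ca ex_init.2 p p.2 3%:R^-1.
Proof.
move=> p10 p12 p2c; apply: cake_aff_uniform => // i; rewrite ?/inNI ex_init_budget.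
- by apply/andP; split; [lra | apply/asboolP; exact: ex_approves].
- by move: p2c; rewrite /ex_c; lra.
Qed.

Lemma ex_init_cake (D : seq (R * R)) : division ex_c ex_Ca set0 D ->
  exists2 p, p \in D & cake_aff ex_Ca ex_init.2 p p.2 3%:R^-1.
Proof.
move=> hD; have [|p pD] := division_full _ hD; first exact: ltW ex_c_gt0.
by exists p => //; have [] := division_piece hD pD; exact: ex_init_aff.
Qed.

(* The invariant is preserved: cake purchases only lower budgets, and goods
   cannot be bought. *)
Lemma ex_step_from_inv (s s' : mstate R 3 1) :
  mes_step ex_c ex_Ca ex_Ga s s' -> ex_inv s -> ex_inv s'.
Proof.
case=> [Cp Gp b D p x rho hD pD haff _ _ _ | Cp Gp b D g rho _ hgood _ _] hinv;
  last by case: (ex_inv_no_good hinv hgood).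
case: hinv => /= -> mC sC b0 hlt.
have [rho0 [/andP [px _] _]] := haff.
have z0 : 0 <= (x - p.1) * rho by rewrite mulr_ge0 // subr_ge0 ltW.
have pay i := pay_bounds (inNI ex_Ca b p i) (b0 i) z0.
split => //=.
- exact: measurableU mC (citv_measurable _ _).
- by move=> y [/sC | /(bought_piece_sub hD pD haff)].
- by move=> i; case/andP: (pay i).
- by apply: le_lt_trans hlt; apply: ler_sum => i _; case/andP: (pay i).
Qed.

(* The first step establishes the invariant: the good (price >= 1/2) loses
   to cake (price 1/3), and the cake purchase is paid by all three agents,
   so both supporters of the good pay a positive amount. *)
Lemma ex_step_from_init (s s' : mstate R 3 1) :
  mes_step ex_c ex_Ca ex_Ga s s' -> s = ex_init -> ex_inv s'.
Proof.
move=> hs; rewrite /ex_init /mes_init.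
case: hs => [Cp Gp b D p x rho hD pD haff _ _ _ | Cp Gp b D g rho hD hgood hmin _]
  [eC eG eb]; subst Cp Gp b; last first.
  have [q qD hq] := ex_init_cake hD.
  have := hmin _ _ _ qD hq.
  have := good_aff_price hgood; rewrite card_supporters.
  lra.
have half : ex_alpha / 3%:R = 1/2 :> R by rewrite /ex_alpha; field.
have [_ [/andP [px _] _]] := haff.
have rho_pos : 0 < rho by have := cake_aff_price haff; lra.
have [p10 p12 p2c] := division_piece hD pD.
have hI i : inNI ex_Ca (fun=> ex_alpha / 3%:R) p i.
  rewrite /inNI half; apply/andP; split; first lra.
  by apply/asboolP; exact: ex_approves.
set M := Num.min (1/2 : R) ((x - p.1) * rho).
have M_pos : 0 < M.
  by rewrite lt_min; apply/andP; split; [lra | rewrite mulr_gt0 // subr_gt0].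
have M_le : M <= 1/2 by rewrite ge_min lexx.
have -> : (fun i => if inNI ex_Ca (fun=> ex_alpha / 3%:R) p i
                   then ex_alpha / 3%:R - Num.min (ex_alpha / 3%:R) ((x - p.1) * rho)
                   else ex_alpha / 3%:R) = fun=> 1/2 - M.
  by apply: funext => i; rewrite hI half.
split => //=.
- exact: measurableU measurable0 (citv_measurable _ _).
- by move=> y [// | /(bought_piece_sub hD pD haff)].
- by move=> i; lra.
- rewrite /supporters_budget sumr_const card_supporters -mulr_natr; lra.
Qed.

Lemma ex_reachable (s s' : mstate R 3 1) :
  mes_star ex_c ex_Ca ex_Ga s s' ->
  s = ex_init \/ ex_inv s -> s' = ex_init \/ ex_inv s'.
Proof.
elim=> // s1 s2 s3 hstep _ IH h1; apply: IH; right.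
by case: h1 => [/(ex_step_from_init hstep) | /(ex_step_from_inv hstep)].
Qed.

Lemma ex_init_not_final : ~ mes_final ex_c ex_Ca ex_Ga ex_init.
Proof.
case=> D [hD [hnone _]]; have [q qD hq] := ex_init_cake hD.
exact: hnone _ _ _ qD hq.
Qed.

Lemma ex_outcome_shape (A : bundle R 1) :
  mes_outcome ex_c ex_alpha ex_Ca ex_Ga A ->
  [/\ A.2 = finset.set0, measurable A.1 & A.1 `<=` citv 0 ex_c].
Proof.
case=> s [hs [hfin ->]].
case: (ex_reachable hs (or_introl erefl)) => [hinit | [? ? ? _ _]]; last by split.
by move: hfin; rewrite hinit => /ex_init_not_final.
Qed.

Lemma ex_whole_division : division ex_c ex_Ca set0 [:: (0, ex_c)].
Proof.
split; first by rewrite /= andbT !lexx ex_c_gt0.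
split=> //; split; first by move=> p; rewrite inE => /eqP -> /=; exact: setI0.
split; first by move=> x hx; right; exists (0, ex_c) => //; exact: mem_head.
by move=> p i; rewrite inE => /eqP ->; left.
Qed.

(* MES has an outcome: buy the whole cake at price 1/3, then stop. *)
Lemma ex_outcome_exists : exists A, mes_outcome ex_c ex_alpha ex_Ca ex_Ga A.
Proof.
have [b1 hstep] : exists b1,
    mes_step ex_c ex_Ca ex_Ga ex_init (set0 `|` citv 0 ex_c, finset.set0, b1).
  eexists; apply: (mes_step_cake (p := (0, ex_c)) (x := ex_c) ex_whole_division).
  - exact: mem_head.
  - by apply: ex_init_aff; rewrite //= ex_c_gt0.
  - by move=> q y r _ /cake_aff_price; lra.
  - by move=> g r /good_aff_price; rewrite card_supporters; lra.
  - by move=> y [_ [/andP [_]]].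
exists (set0 `|` citv 0 ex_c, finset.set0); eexists; split.
  exact: mes_star_step hstep (mes_star_refl _ _ _ _).
split=> //; exists [::]; split.
  by do 4 split=> //; move=> x hx; left; right.
by split=> // g r; exact/ex_inv_no_good/(ex_step_from_init hstep).
Qed.

(* Such an allocation violates EJR-M: the supporters {0, 1} form a
   1-cohesive group approving the good, yet each gets utility <= 1/2. *)
Lemma ex_not_EJRM (A : bundle R 1) :
  A.2 = finset.set0 -> measurable A.1 -> A.1 `<=` citv 0 ex_c ->
  ~ EJRM ex_c ex_alpha ex_Ca ex_Ga A.
Proof.
move=> A2 mA sA hE.
pose Ns : {set 'I_3} := [set i | ord0 \in ex_Ga i]%SET.
have NsGa i : i \in Ns -> ex_Ga i = [set: 'I_1]%SET.
  by rewrite inE ex_Ga_mem /ex_Ga => /negbTE ->.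
have cardNs : #|Ns| = 2%N by rewrite cardsE card_supporters.
have commonG : (\bigcap_(i in Ns) ex_Ga i)%SET = [set: 'I_1]%SET.
  by rewrite (eq_bigr (fun=> [set: 'I_1]%SET)) ?big1.
have [|||j jNs] := hE 1 Ns ltr01.
- by rewrite cardNs /ex_alpha; lra.
- rewrite /size_b commonG cardsT card_ord /=.
  by have := len_ge0 [set x | 0 <= x <= ex_c /\ forall i, i \in Ns -> ex_Ca i x]; lra.
- exists (set0, [set: 'I_1]%SET); split.
    by exists [::]; do 2 split=> //; apply/seteqP; split=> x // [].
  split; first by rewrite /size_b /len measure0 cardsT card_ord add0r.
  by move=> i /NsGa ->; split.
rewrite /util A2 finset.setI0 cards0 addr0.
have : len (ex_Ca j `&` A.1) <= ex_c.
  apply: len_le_citv; first exact: ltW ex_c_gt0.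
    exact: measurableI (citv_measurable _ _) mA.
  by move=> y [_ /sA].
rewrite /ex_c; lra.
Qed.

Lemma ex_valid : valid_instance ex_c ex_alpha ex_Ca ex_Ga.
Proof.
split=> //; do 4 (split; first by rewrite /ex_c /ex_alpha; first [lra | left; lra]).
move=> i; exists [:: (0, ex_c)].
split; first by rewrite /= andbT !lexx ltW // ex_c_gt0.
split=> //; apply/seteqP; split=> x /=.
  by exists (0, ex_c) => //; exact: mem_head.
by case=> p; rewrite inE => /eqP ->.
Qed.

End Counterexample.

Theorem mainTheorem6 (R : realType) :
  exists (n m : nat) (c alpha : R) (Ca : 'I_n -> set R) (Ga : 'I_n -> {set 'I_m}),
    valid_instance c alpha Ca Ga /\
    (exists A, mes_outcome c alpha Ca Ga A) /\
    (forall A, mes_outcome c alpha Ca Ga A -> ~ EJRM c alpha Ca Ga A).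
Proof.
exists 3%N, 1%N, (ex_c R), (ex_alpha R), (@ex_Ca R), ex_Ga.
split; first exact: ex_valid.
split; first exact: ex_outcome_exists.
by move=> A /ex_outcome_shape [A2 mA sA]; exact: ex_not_EJRM.
Qed.
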